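(* In the stalactic monoid ${\mathsf{stal}}$, the relation $\sim_o$ coincides with $\equiv_{\mathrm{ev}}$: for $s,t\in{\mathsf{stal}}$, there exist $g,h\in{\mathsf{stal}}$ with $sg=gt$ and $hs=th$ if and only if $s$ and $t$ have the same evaluation.
   Context: Let $\mathcal{A}=\{1<2<3<\cdots\}$ be the ordered alphabet of positive integers. For a monoid $M$ and $x,y\in M$, write $x\sim_o y$ iff there exist $g,h\in M$ with $xg=gy$ and $hx=yh$. The evaluation of a word $w$ is the tuple $(|w|_a)_{a}$ giving the number of occurrences of each letter $a$; the monoid below is defined by evaluation-preserving relations, so the evaluation of an element is well defined, and $s\equiv_{\mathrm{ev}} t$ means $s$ and $t$ have the same evaluation. The stalactic monoid ${\mathsf{stal}}$ is $\mathcal{A}^*$ modulo the congruence generated by the relations $bavb=abvb$ for all letters $a,b$ and words $v\in\mathcal{A}^*$. Equivalently, two words are equal in ${\mathsf{stal}}$ iff they have the same evaluation and the same order of rightmost occurrences of their letters. *)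

From mathcomp Require Import all_boot.
Set Implicit Arguments. Unset Strict Implicit. Unset Printing Implicit Defensive.

Definition word := seq nat.
Definition is_word (w : word) : bool := all (fun a => 0 < a) w.

Definition stal_rel (l r : word) : Prop :=
  exists a b (v : word), 0 < a /\ 0 < b /\ is_word v /\
    l = [:: b, a & v ++ [:: b]] /\ r = [:: a, b & v ++ [:: b]].

Inductive stal_eq : word -> word -> Prop :=
| stal_step : forall u w l r, stal_rel l r -> stal_eq (u ++ l ++ w) (u ++ r ++ w)
| stal_refl : forall w, stal_eq w w
| stal_sym : forall w1 w2, stal_eq w1 w2 -> stal_eq w2 w1
| stal_trans : forall w1 w2 w3, stal_eq w1 w2 -> stal_eq w2 w3 -> stal_eq w1 w3.

(* x ~_o y in stal (elements represented by words; product = concatenation). *)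
Definition stal_conj_o (x y : word) : Prop :=
  exists g h : word, is_word g /\ is_word h /\
    stal_eq (x ++ g) (g ++ y) /\ stal_eq (h ++ x) (y ++ h).

Definition evaluation (w : word) : nat -> nat := fun a => count_mem a w.
Definition ev_equiv (s t : word) : Prop := forall a, 0 < a -> evaluation s a = evaluation t a.

(* The relation [b a v b = a b v b] lets a letter that occurs again later be
   exchanged with its neighbour.  Hence if [u] is a permutation of [u'] and
   every letter of [u] occurs in [v], then [u v = u' v] in stal.  When [s] and
   [t] have the same evaluation this gives [s t = t t] and [s s = t s], so
   [g := t] and [h := s] witness [s ~o t].  Conversely the defining relations
   preserve the evaluation, and [s g = g t] forces [s] and [t] to have the
   same evaluation. *)
From mathcomp Require Import all_boot zify.

Set Implicit Arguments.
Unset Strict Implicit.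
Unset Printing Implicit Defensive.

Lemma is_word_cat u v : is_word (u ++ v) = is_word u && is_word v.
Proof. exact: all_cat. Qed.

Lemma is_word_sub u v : {subset u <= v} -> is_word v -> is_word u.
Proof. by move=> uv /allP v_pos; apply/allP=> x /uv /v_pos. Qed.

Lemma stal_eq_catl c w1 w2 : stal_eq w1 w2 -> stal_eq (c ++ w1) (c ++ w2).
Proof.
elim=> [u w l r lr|w|w1' w2' _ IH|w1' w2' w3 _ IH12 _ IH23].
- by have := stal_step (c ++ u) w lr; rewrite -!catA.
- exact: stal_refl.
- exact: stal_sym.
- exact: stal_trans IH12 IH23.
Qed.

Lemma count_mem_stal_eq a w1 w2 :
  stal_eq w1 w2 -> count_mem a w1 = count_mem a w2.
Proof.
elim=> [u w l r [x [y [v [_ [_ [_ [-> ->]]]]]]]|w|w1' w2' _ IH|w1' w2' w3 _ IH12 _ IH23] //.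
- by rewrite !count_cat /=; lia.
- by rewrite IH12.
Qed.

Lemma stal_eq_swap x y w : 0 < x -> 0 < y -> is_word w -> x \in w ->
  stal_eq [:: y, x & w] [:: x, y & w].
Proof.
move=> x_pos y_pos w_word xw; case/splitPr: w / xw w_word => w1 w2 w_word.
have w1_word : is_word w1 by move: w_word; rewrite is_word_cat => /andP[].
have catE a b : [:: a, b & w1 ++ x :: w2] = [:: a, b & w1 ++ [:: x]] ++ w2.
  by rewrite /= -catA.
have rel : stal_rel [:: x, y & w1 ++ [:: x]] [:: y, x & w1 ++ [:: x]].
  by exists y, x, w1.
by rewrite !catE; exact/stal_sym/(stal_step [::] w2 rel).
Qed.

Lemma stal_eq_move_front x p w : 0 < x -> is_word p -> is_word w -> x \in w ->
  stal_eq (p ++ x :: w) (x :: p ++ w).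
Proof.
move=> x_pos; elim: p => [|c p IH] /= => [*|/andP[c_pos p_word] w_word xw].
  exact: stal_refl.
have /= IHc := stal_eq_catl [:: c] (IH p_word w_word xw).
apply: stal_trans IHc _.
by apply: stal_eq_swap; rewrite ?is_word_cat ?p_word ?mem_cat ?xw ?orbT.
Qed.

Lemma stal_eq_perm_cat u u' v : perm_eq u u' -> {subset u <= v} -> is_word v ->
  stal_eq (u ++ v) (u' ++ v).
Proof.
elim: u u' => [|x u IH] u'.
  by rewrite perm_sym => /perm_nilP -> *; exact: stal_refl.
move=> uu' uv v_word.
have xu' : x \in u' by rewrite -(perm_mem uu') mem_head.
have xv : x \in v by apply: uv; rewrite mem_head.
have u_v : {subset u <= v} by move=> y yu; apply: uv; rewrite inE yu orbT.
case/splitPr: u' / xu' uu' => p q uu'.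
have u_pq : perm_eq u (p ++ q).
  by rewrite -(perm_cons x) (perm_trans uu') // -cat1s perm_catCA.
have pq_v : {subset p ++ q <= v}.
  by move=> y; rewrite -(perm_mem u_pq); apply: u_v.
have pq_word : is_word (p ++ q) := is_word_sub pq_v v_word.
have /= IHu := stal_eq_catl [:: x] (IH _ u_pq u_v v_word).
apply: stal_trans IHu _; rewrite -catA -cat_cons -catA /=.
apply/stal_sym/stal_eq_move_front; first exact: (allP v_word).
- by move: pq_word; rewrite is_word_cat => /andP[].
- by move: pq_word; rewrite !is_word_cat v_word => /andP[_ ->].
- by rewrite mem_cat xv orbT.
Qed.

Lemma ev_equiv_perm_eq s t : is_word s -> is_word t ->
  ev_equiv s t <-> perm_eq s t.
Proof.
move=> /allP s_pos /allP t_pos; split=> [st|/permP st a _]; last exact: st.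
apply/allP=> a; rewrite mem_cat => /orP[/s_pos|/t_pos] a_pos; apply/eqP;
  exact: st.
Qed.

Theorem mainTheorem9 (s t : word) :
  is_word s -> is_word t -> (stal_conj_o s t <-> ev_equiv s t).
Proof.
move=> s_word t_word; split.
  move=> [g [_ [_ [_ [sg_gt _]]]]] a _; have := count_mem_stal_eq a sg_gt.
  by rewrite !count_cat addnC => /addnI.
move=> /(ev_equiv_perm_eq s_word t_word) st.
exists t, s; do 3!split=> //.
- by apply: stal_eq_perm_cat => // x; rewrite (perm_mem st).
- by apply: stal_eq_perm_cat.
Qed.
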